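(* Let $X=x_1x_2\dots$ and $Y=y_1y_2\dots$ be independent i.i.d. sequences uniform on $\{B,b,R,r\}$. Then almost surely, for every $r\ge0$ the combinatorial ball of radius $r$ around the root of $T_+(x_1\dots x_m)\cup T_-(y_1\dots y_m)$ does not depend on $m$ for all sufficiently large $m$; consequently the limit triangulation $T_+(X)\cup T_-(Y)$ is well defined and locally finite, and it has exactly one end.
   Context: Necklace construction (Sheffield). Given a finite word $X=x_1\dots x_n$ in $\{B,b,R,r\}$, build inductively disc triangulations $D_0\subset\dots\subset D_n$ in the closed upper half-plane with blue/red vertices and an active edge with blue endpoint $b_j$ and red endpoint $r_j$; initially non-positive integers are blue, positive integers red, $b_0=0,r_0=1$. Step according to $x_{j+1}$: (B) new blue vertex $b_{j+1}$, triangle $(b_j,r_j,b_{j+1})$, $r_{j+1}=r_j$; (R) new red vertex $r_{j+1}$, triangle $(b_j,r_j,r_{j+1})$, $b_{j+1}=b_j$; (b) $b_{j+1}$ = counterclockwise boundary neighbour of $b_j$ (or $m-1$, adding edge $[m-1,m]$, if $b_j=m\in\mathbb Z$), triangle $(b_{j+1},b_j,r_j)$, $r_{j+1}=r_j$; (r) $r_{j+1}$ = clockwise boundary neighbour of $r_j$ (or $m+1$, adding $[m,m+1]$, if $r_j=m\in\mathbb Z$), triangle $(b_j,r_j,r_{j+1})$, $b_{j+1}=b_j$. $T_+(X)$ is $D_n$ rooted at the first triangle constructed; $T_-(Y)$ is the analogous construction in the lower half-plane; $T_+(\cdot)\cup T_-(\cdot)$ denotes the two pieces glued along the real line, rooted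 at the root of the upper piece. Combinatorial balls: $B_0$ is the root vertex, $B_{r+1}$ is all triangles incident to a vertex of $B_r$ with their vertices and edges. A triangulation has one end if the complement of every finite subgraph has exactly one infinite connected component. *)

From Stdlib Require Import Reals ZArith List.
Import ListNotations.
Open Scope R_scope.

Inductive letter := LB | Lb | LR | Lr.

(* VZ z : integer vertex on the real line;
   VU j : vertex created (upper piece) at step j+1, i.e. by letter x_{j+1};
   VL j : vertex created (lower piece) at step j+1, i.e. by letter y_{j+1}. *)
Inductive vertex := VZ (z : Z) | VU (n : nat) | VL (n : nat).

Definition triangle := (vertex * vertex * vertex)%type.

(** * Necklace construction (combinatorial)
    The free boundary of D_j (the part off the real line) is a path
    L = lz, (ls reversed), b_j, r_j, (rs), rz = R.  [ls] lists the non-integer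
    vertices strictly left of the active edge, nearest first (its head is b_j
    if non-empty; otherwise b_j = lz); symmetrically for [rs]/[rz]. *)
Record state := mkState { lz : Z; ls : list vertex; rz : Z; rs : list vertex }.

Definition init_state : state := mkState 0%Z [] 1%Z [].

Definition bcur (s : state) : vertex :=
  match ls s with [] => VZ (lz s) | x :: _ => x end.
Definition rcur (s : state) : vertex :=
  match rs s with [] => VZ (rz s) | x :: _ => x end.

Definition step (new : vertex) (x : letter) (s : state) : state * triangle :=
  match x with
  | LB => (mkState (lz s) (new :: ls s) (rz s) (rs s), (bcur s, rcur s, new))
  | LR => (mkState (lz s) (ls s) (rz s) (new :: rs s), (bcur s, rcur s, new))
  | Lb =>
      match ls s with
      | [] => (mkState (lz s - 1)%Z [] (rz s) (rs s),
               (VZ (lz s - 1)%Z, VZ (lz s), rcur s))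
      | b :: l => let s' := mkState (lz s) l (rz s) (rs s) in
                  (s', (bcur s', b, rcur s))
      end
  | Lr =>
      match rs s with
      | [] => (mkState (lz s) (ls s) (rz s + 1)%Z [],
               (bcur s, VZ (rz s), VZ (rz s + 1)%Z))
      | r :: l => let s' := mkState (lz s) (ls s) (rz s) l in
                  (s', (bcur s, r, rcur s'))
      end
  end.

(* State D_n after reading x_1 ... x_n, where x_{j+1} = X j. *)
Fixpoint run (mk : nat -> vertex) (X : nat -> letter) (n : nat) : state :=
  match n with
  | O => init_state
  | S n => fst (step (mk n) (X n) (run mk X n))
  end.

Definition tri_of (mk : nat -> vertex) (X : nat -> letter) (j : nat) : triangle :=
  snd (step (mk j) (X j) (run mk X j)).

Inductive side := Up | Dn.
Definition tid := (side * nat)%type.   (* triangle (Up, j): step j+1 of X *)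

Definition tri (X Y : nat -> letter) (t : tid) : triangle :=
  match t with
  | (Up, j) => tri_of VU X j
  | (Dn, j) => tri_of VL Y j
  end.

Definition has_vert (p : triangle) (v : vertex) : Prop :=
  v = fst (fst p) \/ v = snd (fst p) \/ v = snd p.

(* [Some m]: T_+(x_1..x_m) u T_-(y_1..y_m);  [None]: the limit T_+(X) u T_-(Y). *)
Definition present (m : option nat) (t : tid) : Prop :=
  match m with None => True | Some m => (snd t < m)%nat end.

(* root vertex: b_0 = 0, a vertex of the root triangle *)
Definition root : vertex := VZ 0.

Definition ballT_step (X Y : nat -> letter) (m : option nat)
    (V : vertex -> Prop) (t : tid) : Prop :=
  present m t /\ exists w, V w /\ has_vert (tri X Y t) w.

Fixpoint ballV (X Y : nat -> letter) (m : option nat) (r : nat) : vertex -> Prop :=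
  match r with
  | O => fun v => v = root
  | S r => fun v => ballV X Y m r v \/
        exists t, ballT_step X Y m (ballV X Y m r) t /\ has_vert (tri X Y t) v
  end.

Definition ballT (X Y : nat -> letter) (m : option nat) (r : nat) (t : tid) : Prop :=
  match r with
  | O => False
  | S r => ballT_step X Y m (ballV X Y m r) t
  end.

Definition same_ball (X Y : nat -> letter) (m m' : option nat) (r : nat) : Prop :=
  (forall v, ballV X Y m r v <-> ballV X Y m' r v) /\
  (forall t, ballT X Y m r t <-> ballT X Y m' r t).

Definition isV (X Y : nat -> letter) (v : vertex) : Prop :=
  exists t, has_vert (tri X Y t) v.

Definition locally_finite (X Y : nat -> letter) : Prop :=
  forall v, isV X Y v ->
    exists N, forall t, has_vert (tri X Y t) v -> (snd t < N)%nat.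

Definition adj (X Y : nat -> letter) (u v : vertex) : Prop :=
  u <> v /\ exists t, has_vert (tri X Y t) u /\ has_vert (tri X Y t) v.

Inductive reach (X Y : nat -> letter) (S : list vertex) : vertex -> vertex -> Prop :=
  | reach_refl : forall v, isV X Y v -> ~ In v S -> reach X Y S v v
  | reach_step : forall u v w, reach X Y S u v -> adj X Y v w -> ~ In w S ->
                 reach X Y S u w.

Definition infinite_comp (X Y : nat -> letter) (S : list vertex) (v : vertex) : Prop :=
  reach X Y S v v /\ ~ exists l : list vertex, forall w, reach X Y S v w -> In w l.

Definition one_ended (X Y : nat -> letter) : Prop :=
  forall S : list vertex,
    (exists v, infinite_comp X Y S v) /\
    (forall u v, infinite_comp X Y S u -> infinite_comp X Y S v -> reach X Y S u v).

Definition cyl := (list letter * list letter)%type.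

Definition in_cyl (c : cyl) (X Y : nat -> letter) : Prop :=
  (forall i, (i < length (fst c))%nat -> X i = nth i (fst c) LB) /\
  (forall i, (i < length (snd c))%nat -> Y i = nth i (snd c) LB).

Definition cyl_mass (c : cyl) : R := (/ 4) ^ (length (fst c) + length (snd c)).

(* P is contained in a null set of the law of (X, Y), X, Y independent i.i.d.
   uniform on {B,b,R,r}: covered by countably many cylinders of total mass <= eps *)
Definition null_set (P : (nat -> letter) -> (nat -> letter) -> Prop) : Prop :=
  forall eps : R, eps > 0 ->
    exists C : nat -> cyl,
      (forall X Y, P X Y -> exists i, in_cyl (C i) X Y) /\
      (forall N, sum_f_R0 (fun i => cyl_mass (C i)) N <= eps).

Definition almost_surely (Q : (nat -> letter) -> (nat -> letter) -> Prop) : Prop :=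
  null_set (fun X Y => ~ Q X Y).

(* The frontier of T_+(x_1..x_n) to the left of the active edge is a stack of
   non-integer vertices sitting on the integers 0, -1, ..., -d_n: the letter b pops
   the stack or, when it is empty, increases the depth d_n; symmetrically on the
   right with r.  Once the four depths (left/right, upper/lower) are unbounded,
   every vertex leaves the frontier for good, so it lies in finitely many
   triangles, the balls stabilise, and the triangles built after any finite time
   form a connected set, glued along the far left of the real line: one end.
   A depth stays bounded by k with probability zero: the stack height shifted by
   k + 1 - d is a lazy simple random walk killed at 0, and by the reflection
   principle it survives L steps with probability at most
   2 (k + 1) C(2L, L) / 4^L <= 2 (k + 1) / sqrt (2L + 1). *)

From Pilot Require Import Defs.
From Stdlib Require Import Reals ZArith List Lia Lra Classical ClassicalEpsilon.
Import ListNotations.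

Definition stack (red : bool) (s : state) : list vertex := if red then rs s else ls s.
Definition bnd (red : bool) (s : state) : Z := if red then rz s else lz s.
Definition cur (red : bool) (s : state) : vertex := if red then rcur s else bcur s.

Lemma cur_stack red s :
  cur red s = match stack red s with [] => VZ (bnd red s) | u :: _ => u end.
Proof. destruct red; reflexivity. Qed.

(* [(a, d)]: the height a of one frontier stack and the depth d (see [run_wrun]). *)
Definition wstate := (nat * nat)%type.

Definition wstep (red : bool) (x : letter) (s : wstate) : wstate :=
  let (a, d) := s in
  match red, x with
  | false, LB | true, LR => (S a, d)
  | false, Lb | true, Lr => match a with O => (O, S d) | S a' => (a', d) end
  | _, _ => (a, d)
  end.

Fixpoint wrun (red : bool) (X : nat -> letter) (n : nat) : wstate :=
  match n with O => (0%nat, 0%nat) | S n => wstep red (X n) (wrun red X n) end.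

Definition depth (red : bool) (X : nat -> letter) (n : nat) : nat := snd (wrun red X n).

Definition bnd_index (red : bool) (d : nat) : Z :=
  if red then (1 + Z.of_nat d)%Z else (- Z.of_nat d)%Z.

Lemma run_wrun mk X red n :
  length (stack red (run mk X n)) = fst (wrun red X n) /\
  bnd red (run mk X n) = bnd_index red (depth red X n).
Proof.
  unfold depth; induction n as [|n IH]; [destruct red; split; reflexivity|].
  cbn [run wrun]; destruct (run mk X n) as [l0 ls0 r0 rs0].
  destruct (wrun red X n) as [a d]; cbn [fst snd] in IH |- *.
  destruct red, (X n), ls0, rs0, a; unfold stack, bnd, bnd_index in *;
    cbn [step wstep ls rs lz rz fst snd length] in *; lia.
Qed.

Section OneSide.

Variable mk : nat -> vertex.
Hypothesis mk_inj : forall i j, mk i = mk j -> i = j.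
Hypothesis mk_not_integer : forall i z, mk i <> VZ z.
Variable X : nat -> letter.

Notation st n := (run mk X n).

Lemma stack_step red n u :
  In u (stack red (st (S n))) -> u = mk n \/ In u (stack red (st n)).
Proof.
  cbn [run]; destruct (st n) as [a l b r]; unfold stack.
  destruct red, (X n); cbn [step]; try destruct l; try destruct r; cbn; intuition (subst; auto).
Qed.

Lemma stack_created red n u : In u (stack red (st n)) -> exists i, u = mk i.
Proof.
  induction n as [|n IH]; [destruct red; contradiction|].
  intros [->|Hu]%stack_step; eauto.
Qed.

Lemma tri_of_cur red j :
  has_vert (tri_of mk X j) (cur red (st j)) /\
  has_vert (tri_of mk X j) (cur red (st (S j))).
Proof.
  unfold tri_of, has_vert; cbn [run]; destruct (st j) as [a l b r].
  unfold cur, bcur, rcur; destruct red, (X j); cbn [step];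
    try destruct l; try destruct r; cbn; tauto.
Qed.

Lemma tri_of_vert_cur j v : has_vert (tri_of mk X j) v ->
  exists red, v = cur red (st j) \/ v = cur red (st (S j)).
Proof.
  unfold tri_of, has_vert; cbn [run]; destruct (st j) as [a l b r].
  unfold cur, bcur, rcur; destruct (X j); cbn [step];
    try destruct l; try destruct r; cbn;
    intros [H|[H|H]]; subst v; solve [exists false; tauto | exists true; tauto].
Qed.

Lemma depth_step red n : depth red X (S n) = depth red X n \/
  (depth red X (S n) = S (depth red X n) /\ stack red (st n) = []).
Proof.
  destruct (run_wrun mk X red n) as [Hlen _]; unfold depth in *; cbn [wrun].
  destruct (wrun red X n) as [a d]; cbn [fst] in Hlen.
  destruct red, (X n), a; cbn; auto; right; split; auto; apply length_zero_iff_nil; auto.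
Qed.

Lemma depth_mono red a n : (a <= n)%nat -> (depth red X a <= depth red X n)%nat.
Proof. induction 1; auto. destruct (depth_step red m) as [E|[E _]]; lia. Qed.

Lemma depth_crossing red a n z : (depth red X a <= z < depth red X n)%nat ->
  exists j, (a <= j < n)%nat /\ depth red X j = z /\ stack red (st j) = [].
Proof.
  induction n as [|n IH]; intros Hz; [cbn in Hz; lia|].
  destruct (Nat.lt_ge_cases z (depth red X n)) as [Hlt|Hge].
  - destruct (IH ltac:(lia)) as (j & Hj & Ej). exists j; split; auto; lia.
  - destruct (depth_step red n) as [E|[E Hnil]]; [lia|].
    assert (a <= n)%nat.
    { destruct (Nat.le_gt_cases a n) as [|Han]; auto.
      pose proof (depth_mono red (S n) a Han); lia. }
    exists n; repeat split; auto; lia.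
Qed.

Lemma cur_cases red j :
  (stack red (st j) = [] /\ cur red (st j) = VZ (bnd_index red (depth red X j))) \/
  exists i, cur red (st j) = mk i /\ In (mk i) (stack red (st j)).
Proof.
  rewrite cur_stack. destruct (run_wrun mk X red j) as [_ Hb].
  destruct (stack red (st j)) as [|u l] eqn:El.
  - left; rewrite Hb; auto.
  - right. assert (Hu : In u (stack red (st j))) by (rewrite El; left; auto).
    destruct (stack_created red j u Hu) as [i ->]. exists i; rewrite <- El; auto.
Qed.

Lemma stack_forgets red i j : (i < j)%nat -> stack red (st j) = [] ->
  forall j', (j <= j')%nat -> ~ In (mk i) (stack red (st j')).
Proof.
  intros Hij Hnil j' Hj'. induction Hj' as [|j' Hj' IH].
  - rewrite Hnil; auto.
  - intros [E|Hin]%stack_step; auto. apply mk_inj in E; lia.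
Qed.

Hypothesis depth_unbounded : forall red k, exists n, (k < depth red X n)%nat.

Lemma bnd_eventually_active red a z : (depth red X a <= z)%nat ->
  exists j, (a <= j)%nat /\ has_vert (tri_of mk X j) (VZ (bnd_index red z)).
Proof.
  intros Hz. destruct (depth_unbounded red z) as [n Hn].
  destruct (depth_crossing red a n z ltac:(lia)) as (j & Hj & Ez & Hnil).
  exists j; split; [lia|].
  destruct (tri_of_cur red j) as [Hcur _].
  destruct (cur_cases red j) as [[_ E]|(i & _ & Hin)].
  - rewrite E, Ez in Hcur; exact Hcur.
  - rewrite Hnil in Hin; contradiction.
Qed.

Lemma cur_eventually_ne red v : exists N, forall j, (N <= j)%nat -> cur red (st j) <> v.
Proof.
  destruct (classic (exists i, v = mk i)) as [[i ->]|Hnot_mk].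
  - destruct (depth_unbounded red (depth red X (S i))) as [n Hn].
    destruct (depth_crossing red (S i) n (depth red X (S i)) ltac:(lia))
      as (j & Hj & _ & Hnil).
    exists j; intros j' Hj' E.
    destruct (cur_cases red j') as [[_ E']|(i' & E' & Hin)].
    + rewrite E' in E; eapply mk_not_integer; eauto.
    + rewrite E' in E; rewrite E in Hin.
      exact (stack_forgets red i j ltac:(lia) Hnil j' Hj' Hin).
  - destruct (depth_unbounded red (Z.abs_nat (match v with VZ z => z | _ => 0 end)))
      as [n Hn].
    exists n; intros j Hj E.
    destruct (cur_cases red j) as [[_ E']|(i & E' & _)]; rewrite E' in E; subst v.
    + pose proof (depth_mono red n j Hj).
      cbn [Z.abs_nat] in Hn; unfold bnd_index in Hn; destruct red; lia.
    + eauto.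
Qed.

Lemma tri_of_eventually_avoids v :
  exists N, forall j, (N <= j)%nat -> ~ has_vert (tri_of mk X j) v.
Proof.
  destruct (cur_eventually_ne false v) as [N0 H0].
  destruct (cur_eventually_ne true v) as [N1 H1].
  exists (N0 + N1)%nat; intros j Hj Hv.
  destruct (tri_of_vert_cur j v Hv) as ([|] & [E|E]); symmetry in E;
    [apply (H1 j) | apply (H1 (S j)) | apply (H0 j) | apply (H0 (S j))]; auto; lia.
Qed.

End OneSide.

Definition tri_verts (p : Defs.triangle) : list vertex := [fst (fst p); snd (fst p); snd p].

Lemma in_tri_verts p v : has_vert p v -> In v (tri_verts p).
Proof. unfold has_vert, tri_verts; cbn; intuition. Qed.

Section Limit.

Variables X Y : nat -> letter.
Hypothesis X_unbounded : forall red k, exists n, (k < depth red X n)%nat.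
Hypothesis Y_unbounded : forall red k, exists n, (k < depth red Y n)%nat.

Lemma incident_bounded v : exists N, forall t, has_vert (tri X Y t) v -> (snd t < N)%nat.
Proof.
  destruct (tri_of_eventually_avoids VU ltac:(congruence) ltac:(congruence) X X_unbounded v)
    as [N1 H1].
  destruct (tri_of_eventually_avoids VL ltac:(congruence) ltac:(congruence) Y Y_unbounded v)
    as [N2 H2].
  exists (N1 + N2)%nat; intros [[|] j] Hv; cbn in Hv |- *;
    destruct (Nat.lt_ge_cases j (N1 + N2)); auto; exfalso;
    [apply (H1 j) | apply (H2 j)]; auto; lia.
Qed.

Lemma incident_bounded_list l :
  exists N, forall v t, In v l -> has_vert (tri X Y t) v -> (snd t < N)%nat.
Proof.
  induction l as [|a l [N HN]]; [exists 0%nat; contradiction|].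
  destruct (incident_bounded a) as [M HM]. exists (N + M)%nat.
  intros v t [<-|Hv] Ht; [specialize (HM t Ht) | specialize (HN v t Hv Ht)]; lia.
Qed.

Definition verts_before (N : nat) : list vertex :=
  flat_map (fun j => tri_verts (tri X Y (Up, j)) ++ tri_verts (tri X Y (Dn, j))) (seq 0 N).

Lemma in_verts_before N t v :
  (snd t < N)%nat -> has_vert (tri X Y t) v -> In v (verts_before N).
Proof.
  destruct t as [sd j]; cbn; intros Hj Hv. apply in_flat_map; exists j.
  split; [apply in_seq; lia|]. apply in_or_app.
  destruct sd; [left | right]; apply in_tri_verts; auto.
Qed.

Lemma ball_eventually_constant r :
  exists l, (forall v, ballV X Y None r v -> In v l) /\
  exists M, forall m, (M <= m)%nat ->
    (forall v, ballV X Y (Some m) r v <-> ballV X Y None r v) /\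
    (forall t, ballT X Y (Some m) r t <-> ballT X Y None r t).
Proof.
  induction r as [|r (l & Hl & M & HM)].
  - exists [root]; split; [intros v ->; left; auto|].
    exists 0%nat; intros m _; cbn; split; tauto.
  - destruct (incident_bounded_list l) as [N HN].
    assert (Hstep : forall m, (M + N <= m)%nat -> forall t,
      ballT_step X Y (Some m) (ballV X Y (Some m) r) t <->
      ballT_step X Y None (ballV X Y None r) t).
    { intros m Hm t; destruct (HM m ltac:(lia)) as [HV _]; unfold ballT_step; cbn.
      split; intros [Ht (w & Hw & Hwt)]; (split; [|exists w; split; [apply HV|]]); auto.
      specialize (HN w t (Hl w Hw) Hwt); lia. }
    exists (l ++ verts_before N); split.
    + intros v [Hv|(t & [_ (w & Hw & Hwt)] & Hv)]; apply in_or_app; [left; auto|right].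
      apply (in_verts_before N t); auto. apply (HN w t); auto.
    + exists (M + N)%nat; intros m Hm; destruct (HM m ltac:(lia)) as [HV _]; cbn; split.
      * intros v; rewrite HV.
        split; intros [|(t & Ht & Hv)]; auto; right; exists t; split; auto;
          apply (Hstep m Hm); auto.
      * intros t; apply Hstep; auto.
Qed.

Lemma balls_stabilize r : exists M, forall m, (M <= m)%nat ->
  same_ball X Y (Some m) (Some M) r /\ same_ball X Y (Some m) None r.
Proof.
  destruct (ball_eventually_constant r) as (_ & _ & M & HM). exists M; intros m Hm.
  destruct (HM m Hm) as [HVm HTm]; destruct (HM M (le_n M)) as [HVM HTM].
  split; split; intros; [rewrite HVm, HVM | rewrite HTm, HTM | apply HVm | apply HTm]; tauto.
Qed.

Lemma limit_locally_finite : locally_finite X Y.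
Proof. intros v _; apply incident_bounded. Qed.

Lemma reach_ends F u v : reach X Y F u v -> isV X Y u /\ ~ In u F /\ isV X Y v /\ ~ In v F.
Proof.
  induction 1 as [|u v w _ IH [_ (t & _ & Hw)] HwF]; [tauto|].
  repeat split; try tauto. exists t; auto.
Qed.

Lemma reach_trans F u v w : reach X Y F u v -> reach X Y F v w -> reach X Y F u w.
Proof. intros Huv Hvw; induction Hvw; eauto using reach_step. Qed.

Lemma reach_sym F u v : reach X Y F u v -> reach X Y F v u.
Proof.
  induction 1 as [v Hv HvF|u v w Huv IH [Hne (t & Hv & Hw)] HwF].
  - apply reach_refl; auto.
  - destruct (reach_ends F u v Huv) as (_ & _ & _ & HvF).
    apply (reach_trans F w v u); auto.
    apply (reach_step _ _ F w w v); auto.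
    + apply reach_refl; auto; exists t; auto.
    + split; [congruence|exists t; auto].
Qed.

Lemma reach_in_tri F t u v : has_vert (tri X Y t) u -> has_vert (tri X Y t) v ->
  ~ In u F -> ~ In v F -> reach X Y F u v.
Proof.
  intros Hu Hv HuF HvF.
  assert (Hreach_u : reach X Y F u u) by (apply reach_refl; auto; exists t; auto).
  destruct (classic (u = v)) as [<-|Hne]; auto.
  apply (reach_step _ _ F u u v); auto. split; auto; exists t; auto.
Qed.

Definition late (n : nat) (v : vertex) : Prop :=
  exists t, (n <= snd t)%nat /\ has_vert (tri X Y t) v.

Section AvoidingFiniteSet.

Variables (n : nat) (F : list vertex).
Hypothesis F_early : forall s, In s F -> ~ late n s.

Lemma late_not_in v : late n v -> isV X Y v /\ ~ In v F.
Proof.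
  intros (t & Ht & Hv); split; [exists t; auto|].
  intros Hin; apply (F_early v Hin); exists t; auto.
Qed.

Lemma reach_late_side sd mk Z (Etri : forall j, tri X Y (sd, j) = tri_of mk Z j) m v :
  (n <= m)%nat -> has_vert (tri X Y (sd, m)) v -> reach X Y F v (bcur (run mk Z n)).
Proof.
  assert (Hcur : forall j, (n <= j)%nat ->
    has_vert (tri X Y (sd, j)) (bcur (run mk Z j)) /\
    has_vert (tri X Y (sd, j)) (bcur (run mk Z (S j)))).
  { intros j _; rewrite Etri; apply (tri_of_cur mk Z false j). }
  assert (HnF : forall j w, (n <= j)%nat -> has_vert (tri X Y (sd, j)) w -> ~ In w F).
  { intros j w Hj Hw; apply late_not_in; exists (sd, j); auto. }
  assert (Hchain : forall j, (n <= j)%nat -> reach X Y F (bcur (run mk Z j)) (bcur (run mk Z n))).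
  { induction 1 as [|j Hj IH].
    - destruct (Hcur n (le_n n)) as [Hb _].
      apply reach_refl; [exists (sd, n); auto | eapply HnF; eauto].
    - destruct (Hcur j Hj) as [Hb Hb'].
      apply (reach_trans F _ (bcur (run mk Z j))); auto.
      apply (reach_in_tri F (sd, j)); auto; eapply HnF; eauto. }
  intros Hm Hv. apply (reach_trans F _ (bcur (run mk Z m))); auto.
  destruct (Hcur m Hm) as [Hb _]. apply (reach_in_tri F (sd, m)); auto; eapply HnF; eauto.
Qed.

Lemma late_connected v : late n v -> reach X Y F v (bcur (run VU X n)).
Proof.
  intros ([sd m] & Hm & Hv); cbn in Hm.
  (* after time n both halves still build a triangle at the integer -z, joining them *)
  set (z := (depth false X n + depth false Y n)%nat).
  destruct (bnd_eventually_active VU ltac:(congruence) X X_unbounded false n z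
    ltac:(unfold z; lia)) as (j1 & Hj1 & Hz1).
  destruct (bnd_eventually_active VL ltac:(congruence) Y Y_unbounded false n z
    ltac:(unfold z; lia)) as (j2 & Hj2 & Hz2).
  assert (Hup := reach_late_side Up VU X (fun j => eq_refl)).
  assert (Hdn := reach_late_side Dn VL Y (fun j => eq_refl)).
  destruct sd; [apply (Hup m); auto|].
  apply (reach_trans F _ (bcur (run VL Y n))); [apply (Hdn m); auto|].
  apply (reach_trans F _ (VZ (bnd_index false z))); [apply reach_sym|]; eauto.
Qed.

End AvoidingFiniteSet.

Definition vabs (v : vertex) : nat := match v with VZ z => Z.abs_nat z | _ => 0%nat end.

Lemma late_outside n l : exists v, late n v /\ ~ In v l.
Proof.
  set (z := (depth false X n + S (list_max (map vabs l)))%nat).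
  destruct (bnd_eventually_active VU ltac:(congruence) X X_unbounded false n z
    ltac:(unfold z; lia)) as (j & Hj & Hz).
  exists (VZ (bnd_index false z)); split; [exists (Up, j); auto|].
  intros Hin. apply (in_map vabs) in Hin.
  pose proof (proj1 (Forall_forall _ _) (proj1 (list_max_le _ _) (le_n _)) _ Hin) as Hle.
  cbn in Hle. unfold z in Hle; lia.
Qed.

Lemma infinite_comp_reach_late n F u :
  infinite_comp X Y F u -> exists w, reach X Y F u w /\ late n w.
Proof.
  intros [_ Hinf]. apply NNPP; intros Hnone; apply Hinf.
  exists (verts_before n); intros w Huw.
  destruct (reach_ends F u w Huw) as (_ & _ & (t & Ht) & _).
  apply (in_verts_before n t); auto.
  destruct (Nat.lt_ge_cases (snd t) n) as [|Hnt]; auto.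
  exfalso; apply Hnone; exists w; split; [|exists t]; auto.
Qed.

Lemma limit_one_ended : one_ended X Y.
Proof.
  intros F. destruct (incident_bounded_list F) as [n Hn].
  assert (F_early : forall s, In s F -> ~ late n s).
  { intros s Hs (t & Ht & Hv); specialize (Hn s t Hs Hv); lia. }
  split.
  - destruct (late_outside n []) as (v & Hv & _); exists v; split.
    + destruct (late_not_in n F F_early v Hv); apply reach_refl; auto.
    + intros [l Hl]. destruct (late_outside n l) as (w & Hw & Hwl); apply Hwl, Hl.
      apply (reach_trans F _ (bcur (run VU X n))); [|apply reach_sym];
        apply late_connected; auto.
  - assert (Hhub : forall u, infinite_comp X Y F u -> reach X Y F u (bcur (run VU X n))).
    { intros u Hu; destruct (infinite_comp_reach_late n F u Hu) as (w & Huw & Hw).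
      apply (reach_trans F _ w); auto; apply late_connected; auto. }
    intros u v Hu Hv; apply (reach_trans F _ (bcur (run VU X n))); auto.
    apply reach_sym; auto.
Qed.

End Limit.

Open Scope R_scope.

Lemma C_n_0 n : C n 0 = 1.
Proof. unfold C; rewrite Nat.sub_0_r; cbn; field; apply INR_fact_neq_0. Qed.

Lemma C_n_n n : C n n = 1.
Proof. unfold C; rewrite Nat.sub_diag; cbn; field; apply INR_fact_neq_0. Qed.

Lemma C_pos n k : 0 < C n k.
Proof.
  unfold C; apply Rdiv_lt_0_compat; [|apply Rmult_lt_0_compat]; apply INR_fact_lt_0.
Qed.

Definition binom (n k : nat) : R := if Nat.leb k n then C n k else 0.

Lemma binom_S_S n k : binom (S n) (S k) = binom n k + binom n (S k).
Proof.
  unfold binom; destruct (Nat.leb_spec (S k) (S n)), (Nat.leb_spec k n),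
    (Nat.leb_spec (S k) n); try lia.
  - rewrite pascal; auto.
  - replace k with n by lia; rewrite !C_n_n; ring.
  - ring.
Qed.

Fixpoint binom_psum (n m : nat) : R :=
  match m with O => 0 | S m => binom_psum n m + binom n m end.

Lemma binom_psum_S_S n m : binom_psum (S n) (S m) = binom_psum n m + binom_psum n (S m).
Proof.
  induction m as [|m IH].
  - cbn; unfold binom; cbn; rewrite !C_n_0; ring.
  - change (binom_psum (S n) (S (S m))) with (binom_psum (S n) (S m) + binom (S n) (S m)).
    rewrite IH, binom_S_S; cbn; ring.
Qed.

Lemma binom_psum_SS_S n m :
  binom_psum (S (S n)) (S m) = binom_psum n (m - 1) + 2 * binom_psum n m + binom_psum n (S m).
Proof.
  rewrite binom_psum_S_S; destruct m as [|m].
  - rewrite (binom_psum_S_S n 0); cbn; ring.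
  - rewrite (binom_psum_S_S n m), (binom_psum_S_S n (S m)).
    replace (S m - 1)%nat with m by lia; ring.
Qed.

Fixpoint nsurv (L h : nat) : nat :=
  match L, h with
  | _, O => O
  | O, S _ => 1
  | S L, S h' => 2 * nsurv L h + nsurv L (S h) + nsurv L h'
  end.

Lemma nsurv_0 L : nsurv L 0 = 0%nat.
Proof. destruct L; reflexivity. Qed.

(* By the reflection principle, the number of +-1 paths of length 2L from 2h that
   avoid 0; a letter acts on the height as two such steps. *)
Definition surv_closed (L h : nat) : R :=
  binom_psum (2 * L) (L + h + 1) - binom_psum (2 * L) (L + 1 - h).

Lemma surv_closed_S L h : (1 <= h)%nat ->
  surv_closed (S L) h = surv_closed L (h - 1) + 2 * surv_closed L h + surv_closed L (h + 1).
Proof.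
  intros Hh; unfold surv_closed.
  replace (2 * S L)%nat with (S (S (2 * L))) by lia.
  replace (S L + h + 1)%nat with (S (L + h + 1)) by lia.
  rewrite binom_psum_SS_S.
  replace (L + h + 1 - 1)%nat with (L + h)%nat by lia.
  replace (L + (h - 1) + 1)%nat with (L + h)%nat by lia.
  replace (L + (h + 1) + 1)%nat with (S (L + h + 1)) by lia.
  replace (L + 1 - (h - 1))%nat with (S L + 1 - h)%nat by lia.
  destruct (Nat.le_gt_cases h (S L)).
  - replace (S L + 1 - h)%nat with (S (L + 1 - h)) by lia. rewrite binom_psum_SS_S.
    replace (L + 1 - h - 1)%nat with (L + 1 - (h + 1))%nat by lia.
    replace (S (L + 1 - h)) with (S L + 1 - h)%nat by lia. ring.
  - replace (S L + 1 - h)%nat with 0%nat by lia.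
    replace (L + 1 - (h + 1))%nat with 0%nat by lia.
    replace (L + 1 - h)%nat with 0%nat by lia. cbn; ring.
Qed.

Lemma nsurv_closed L h : INR (nsurv L h) = surv_closed L h.
Proof.
  unfold surv_closed; revert h; induction L as [|L IH]; intros [|h].
  - cbn; ring.
  - replace (0 + S h + 1)%nat with (S (S h)) by lia.
    replace (0 + 1 - S h)%nat with 0%nat by lia.
    assert (H0 : forall m, binom_psum 0 (S m) = 1).
    { induction m as [|m IHm]; cbn in *; unfold binom in *; cbn in *;
        [rewrite C_n_0|rewrite IHm]; ring. }
    rewrite H0; cbn; ring.
  - cbn [nsurv]; replace (S L + 0 + 1)%nat with (S L + 1 - 0)%nat by lia; cbn; ring.
  - fold (surv_closed (S L) (S h)); rewrite surv_closed_S by lia.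
    cbn [nsurv]; rewrite !plus_INR, mult_INR; unfold surv_closed; rewrite !IH.
    replace (S h - 1)%nat with h by lia; replace (S h + 1)%nat with (S (S h)) by lia.
    cbn [INR]; ring.
Qed.

Lemma C_le_central L j : (j <= L)%nat -> C (2 * L) j <= C (2 * L) L.
Proof.
  intros Hj; remember (L - j)%nat as e eqn:He; revert j Hj He.
  induction e as [|e IH]; intros j Hj He; [replace j with L by lia; lra|].
  apply Rle_trans with (C (2 * L) (S j)); [|apply IH; lia].
  rewrite pascal_step3 by lia.
  assert (Hpos := C_pos (2 * L) j).
  assert (Hj0 : 0 < INR (S j)) by (apply lt_0_INR; lia).
  assert (Hratio : 1 <= INR (2 * L - j) / INR (S j)).
  { apply (Rmult_le_reg_r (INR (S j))); auto; unfold Rdiv.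
    rewrite Rmult_assoc, Rinv_l, Rmult_1_l, Rmult_1_r by lra; apply le_INR; lia. }
  nra.
Qed.

Lemma binom_le_central L j : binom (2 * L) j <= C (2 * L) L.
Proof.
  unfold binom; destruct (Nat.leb_spec j (2 * L)); [|left; apply C_pos].
  destruct (Nat.le_gt_cases j L); [apply C_le_central; auto|].
  rewrite pascal_step1 by lia; apply C_le_central; lia.
Qed.

Lemma binom_psum_window n a b M : (forall j, binom n j <= M) ->
  binom_psum n (a + b) - binom_psum n a <= INR b * M.
Proof.
  intros HM; induction b as [|b IH]; [rewrite Nat.add_0_r; cbn; lra|].
  replace (a + S b)%nat with (S (a + b)) by lia; cbn [binom_psum]; rewrite S_INR.
  specialize (HM (a + b)%nat); lra.
Qed.

Lemma surv_closed_le L h : (h <= L + 1)%nat -> surv_closed L h <= 2 * INR h * C (2 * L) L.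
Proof.
  intros Hh; unfold surv_closed.
  replace (L + h + 1)%nat with ((L + 1 - h) + 2 * h)%nat by lia.
  eapply Rle_trans; [apply binom_psum_window; intro j; apply binom_le_central|].
  rewrite mult_INR; cbn [INR]; lra.
Qed.

Lemma central_C_S L : C (2 * S L) (S L) * (INR L + 1) = 2 * (2 * INR L + 1) * C (2 * L) L.
Proof.
  unfold C; replace (2 * S L - S L)%nat with (S L) by lia; replace (2 * L - L)%nat with L by lia.
  replace (2 * S L)%nat with (S (S (2 * L))) by lia.
  cbn [fact]; rewrite !mult_INR, !S_INR, mult_INR; cbn [INR].
  pose proof (INR_fact_neq_0 L); pose proof (INR_fact_neq_0 (2 * L)); pose proof (pos_INR L).
  field; lra.
Qed.

Lemma central_C_sq_le L : (C (2 * L) L) ^ 2 * (2 * INR L + 1) <= 16 ^ L.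
Proof.
  induction L as [|L IH]; [cbn; rewrite C_n_0; lra|].
  assert (E := central_C_S L); set (c := C (2 * L) L) in *.
  pose proof (pos_INR L) as HL.
  assert (Hc' : C (2 * S L) (S L) = 2 * (2 * INR L + 1) * c / (INR L + 1))
    by (rewrite <- E; field; lra).
  rewrite Hc', S_INR; replace (16 ^ S L) with (16 * 16 ^ L) by (cbn; ring).
  assert (Hquad : 4 * (2 * INR L + 1) * (2 * INR L + 3) <= 16 * (INR L + 1) ^ 2) by nra.
  apply Rle_trans with (16 * (c ^ 2 * (2 * INR L + 1))); [|lra].
  replace ((2 * (2 * INR L + 1) * c / (INR L + 1)) ^ 2 * (2 * (INR L + 1) + 1))
    with (c ^ 2 * (2 * INR L + 1) * (4 * (2 * INR L + 1) * (2 * INR L + 3) / (INR L + 1) ^ 2))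
    by (field; lra).
  rewrite (Rmult_comm 16); apply Rmult_le_compat_l; [apply Rmult_le_pos; [apply pow2_ge_0|lra]|].
  apply (Rmult_le_reg_r ((INR L + 1) ^ 2)); [nra|].
  unfold Rdiv; rewrite Rmult_assoc, Rinv_l, Rmult_1_r by nra; lra.
Qed.

Lemma nsurv_mass_small k d : d > 0 -> exists L, INR (nsurv L (S k)) * (/ 4) ^ L <= d.
Proof.
  intros Hd; set (h := INR (S k)).
  assert (Hh : 0 < h) by (apply lt_0_INR; lia).
  destruct (INR_unbounded (4 * h ^ 2 / (d * d) + h)) as [L HL]; exists L.
  assert (Hq : 0 <= 4 * h ^ 2 / (d * d))
    by (apply Rmult_le_pos; [nra|left; apply Rinv_0_lt_compat; nra]).
  assert (HkL : (S k <= L + 1)%nat)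
    by (apply INR_le; rewrite plus_INR; change (INR 1) with 1; fold h; lra).
  set (x := C (2 * L) L * (/ 4) ^ L).
  assert (Hx0 : 0 < x) by (apply Rmult_lt_0_compat; [apply C_pos|apply pow_lt; lra]).
  assert (Hx : x ^ 2 * (2 * INR L + 1) <= 1).
  { assert (E : ((/ 4) ^ L) ^ 2 * 16 ^ L = 1).
    { rewrite <- pow_mult, Nat.mul_comm, pow_mult, <- Rpow_mult_distr.
      replace ((/ 4) ^ 2 * 16) with 1 by field; apply pow1. }
    replace (x ^ 2 * (2 * INR L + 1))
      with (C (2 * L) L ^ 2 * (2 * INR L + 1) * ((/ 4) ^ L) ^ 2) by (unfold x; ring).
    apply Rle_trans with (16 ^ L * ((/ 4) ^ L) ^ 2); [|lra].
    apply Rmult_le_compat_r; [apply pow2_ge_0|apply central_C_sq_le]. }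
  assert (Hmass : INR (nsurv L (S k)) * (/ 4) ^ L <= 2 * h * x).
  { rewrite nsurv_closed; unfold x; rewrite <- Rmult_assoc.
    apply Rmult_le_compat_r; [left; apply pow_lt; lra|apply surv_closed_le; auto]. }
  assert (Hsq : (2 * h * x) ^ 2 <= d ^ 2).
  { assert (H2L : 4 * h ^ 2 <= d ^ 2 * (2 * INR L + 1)).
    { apply (Rmult_le_reg_r (/ (d * d))); [apply Rinv_0_lt_compat; nra|].
      replace (d ^ 2 * (2 * INR L + 1) * / (d * d)) with (2 * INR L + 1) by (field; lra).
      unfold Rdiv in Hq; lra. }
    replace ((2 * h * x) ^ 2) with (4 * h ^ 2 * x ^ 2) by ring.
    apply Rle_trans with (d ^ 2 * (x ^ 2 * (2 * INR L + 1))); [nra|].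
    pose proof (pow2_ge_0 d); nra. }
  nra.
Qed.

Fixpoint words (L : nat) : list (list letter) :=
  match L with
  | O => [[]]
  | S L => flat_map (fun x => map (cons x) (words L)) [LB; Lb; LR; Lr]
  end.

Lemma in_words L w : In w (words L) <-> length w = L.
Proof.
  revert w; induction L as [|L IH]; intros w; cbn [words].
  - destruct w; cbn; split; intuition (discriminate || lia).
  - rewrite in_flat_map; split.
    + intros (x & _ & (w' & <- & Hw')%in_map_iff); cbn; f_equal; apply IH; auto.
    + destruct w as [|x w]; cbn; [lia|]; intros Hw; exists x; split.
      * destruct x; cbn; tauto.
      * apply in_map, IH; lia.
Qed.

Definition wrun_word (red : bool) (s : wstate) (w : list letter) : wstate :=
  fold_left (fun s x => wstep red x s) w s.

Definition prefix (X : nat -> letter) (L : nat) : list letter := map X (seq 0 L).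

Lemma length_prefix X L : length (prefix X L) = L.
Proof. unfold prefix; rewrite length_map, length_seq; auto. Qed.

Lemma nth_prefix X L i : (i < L)%nat -> nth i (prefix X L) LB = X i.
Proof.
  intros Hi; unfold prefix.
  rewrite (nth_indep _ LB (X 0%nat)) by (rewrite length_map, length_seq; auto).
  rewrite map_nth, seq_nth; auto.
Qed.

Lemma wrun_word_prefix red X L : wrun_word red (0%nat, 0%nat) (prefix X L) = wrun red X L.
Proof.
  induction L as [|L IH]; auto.
  unfold wrun_word, prefix in *; rewrite seq_S, map_app, fold_left_app, IH; auto.
Qed.

Definition height (k : nat) (s : wstate) : nat :=
  let (a, d) := s in if Nat.leb d k then (a + (S k - d))%nat else 0%nat.

Definition height_step (red : bool) (x : letter) (h : nat) : nat :=
  match red, x with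
  | false, LB | true, LR => match h with O => O | S _ => S h end
  | false, Lb | true, Lr => pred h
  | _, _ => h
  end.

Lemma height_wstep red k x s : height k (wstep red x s) = height_step red x (height k s).
Proof.
  destruct s as [a d]; unfold height.
  destruct red, x, a as [|a]; cbn [wstep height_step];
    destruct (Nat.leb_spec d k); try destruct (Nat.leb_spec (S d) k); try lia;
    repeat match goal with |- context [match ?e with O => _ | S _ => _ end] =>
      destruct e eqn:? end; lia.
Qed.

Definition survives (red : bool) (k : nat) (s : wstate) (w : list letter) : bool :=
  Nat.leb (snd (wrun_word red s w)) k.

Lemma count_survivors red k L s :
  length (filter (survives red k s) (words L)) = nsurv L (height k s).
Proof.
  revert s; induction L as [|L IH]; intros [a d].
  - unfold survives, height; cbn [words filter wrun_word fold_left snd].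
    destruct (Nat.leb_spec d k); cbn [length nsurv]; auto.
    destruct (a + (S k - d))%nat eqn:E; [lia|auto].
  - cbn [words flat_map]; rewrite !filter_app, !length_app, !filter_map_swap, !length_map.
    cbn [filter length].
    change (fun y => survives red k (a, d) (?x :: y)) with
      (survives red k (wstep red x (a, d))).
    rewrite !IH, !height_wstep; destruct (height k (a, d)) as [|h].
    + destruct red; cbn; rewrite !nsurv_0; reflexivity.
    + destruct red; cbn [height_step pred nsurv]; lia.
Qed.

Definition listmass (l : list cyl) : R := fold_right (fun c m => cyl_mass c + m) 0 l.

Lemma listmass_app l1 l2 : listmass (l1 ++ l2) = listmass l1 + listmass l2.
Proof. unfold listmass; induction l1 as [|c l1 IH]; cbn; [|rewrite IH]; ring. Qed.

Lemma listmass_nonneg l : 0 <= listmass l.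
Proof.
  unfold listmass; induction l as [|c l IH]; cbn [fold_right]; [lra|].
  assert (0 < cyl_mass c) by (apply pow_lt; lra); lra.
Qed.

Definition covers (l : list cyl) (P : (nat -> letter) -> (nat -> letter) -> Prop) : Prop :=
  forall X Y, P X Y -> exists c, In c l /\ in_cyl c X Y.

Definition finitely_null (P : (nat -> letter) -> (nat -> letter) -> Prop) : Prop :=
  forall d, d > 0 -> exists l, covers l P /\ listmass l <= d.

Lemma finitely_null_exists_bool (P : bool -> (nat -> letter) -> (nat -> letter) -> Prop) :
  (forall b, finitely_null (P b)) -> finitely_null (fun X Y => exists b, P b X Y).
Proof.
  intros HP d Hd.
  destruct (HP false (d / 2) ltac:(lra)) as (l0 & Hc0 & Hm0).
  destruct (HP true (d / 2) ltac:(lra)) as (l1 & Hc1 & Hm1).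
  exists (l0 ++ l1); split; [|rewrite listmass_app; lra].
  intros X Y [[|] HXY];
    [destruct (Hc1 X Y HXY) as (c & Hc & Hin) | destruct (Hc0 X Y HXY) as (c & Hc & Hin)];
    exists c; rewrite in_app_iff; auto.
Qed.

Definition embed_word (side : bool) (w : list letter) : cyl :=
  if side then ([], w) else (w, []).

Lemma listmass_words side L ws : (forall w, In w ws -> length w = L) ->
  listmass (map (embed_word side) ws) = INR (length ws) * (/ 4) ^ L.
Proof.
  unfold listmass; induction ws as [|w ws IH]; intros Hlen; cbn [map fold_right length];
    [cbn; ring|].
  rewrite IH by (intros; apply Hlen; right; auto); rewrite S_INR.
  unfold cyl_mass, embed_word; destruct side; cbn [fst snd length];
    rewrite Hlen by (left; auto); rewrite ?Nat.add_0_l, ?Nat.add_0_r; ring.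
Qed.

Lemma depth_bounded_finitely_null red (side : bool) k :
  finitely_null (fun X Y => forall n, (depth red (if side then Y else X) n <= k)%nat).
Proof.
  intros d Hd; destruct (nsurv_mass_small k d Hd) as [L HL].
  set (ws := filter (survives red k (0%nat, 0%nat)) (words L)).
  assert (Hws : forall w, In w ws -> length w = L)
    by (intros w Hw; apply filter_In in Hw; apply in_words; tauto).
  exists (map (embed_word side) ws); split.
  - intros X Y Hk; set (Z := if side then Y else X) in Hk.
    exists (embed_word side (prefix Z L)); split.
    + apply in_map, filter_In; split; [apply in_words, length_prefix|].
      unfold survives; rewrite wrun_word_prefix; apply Nat.leb_le, Hk.
    + unfold in_cyl, embed_word, Z; destruct side; cbn [fst snd length];
        split; intros i Hi; try lia; rewrite length_prefix in Hi; rewrite nth_prefix; auto.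
  - rewrite (listmass_words side L ws Hws); unfold ws; rewrite count_survivors; exact HL.
Qed.

Definition cyl0 : cyl := ([], []).

Section Enumerate.

Variables (blocks : nat -> list cyl) (eps : R).
Hypothesis blocks_nonempty : forall K, blocks K <> [].
Hypothesis blocks_mass : forall K, listmass (blocks K) <= eps * (/ 2) ^ S K.

Fixpoint blocks_upto (n : nat) : list cyl :=
  match n with O => [] | S n => blocks_upto n ++ blocks n end.

Lemma length_blocks_upto n : (n <= length (blocks_upto n))%nat.
Proof.
  induction n as [|n IH]; cbn; [lia|]; rewrite length_app.
  destruct (blocks n) eqn:E; [contradiction (blocks_nonempty n)|cbn; lia].
Qed.

Lemma blocks_upto_prefix n n' : (n <= n')%nat -> exists r, blocks_upto n' = blocks_upto n ++ r.
Proof.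
  induction 1 as [|n' _ [r Hr]]; [exists []; rewrite app_nil_r; auto|].
  exists (r ++ blocks n'); cbn; rewrite Hr, app_assoc; auto.
Qed.

Lemma listmass_blocks_upto n : listmass (blocks_upto n) <= eps * (1 - (/ 2) ^ n).
Proof.
  induction n as [|n IH]; cbn [blocks_upto]; [cbn; lra|].
  rewrite listmass_app; specialize (blocks_mass n); cbn [pow] in *; lra.
Qed.

Definition enum_blocks (i : nat) : cyl := nth i (blocks_upto (S i)) cyl0.

Lemma enum_blocks_nth n i :
  (i < length (blocks_upto n))%nat -> enum_blocks i = nth i (blocks_upto n) cyl0.
Proof.
  intros Hi; unfold enum_blocks; destruct (Nat.le_gt_cases (S i) n) as [Hn|Hn].
  - destruct (blocks_upto_prefix _ _ Hn) as [r ->].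
    rewrite app_nth1; auto; pose proof (length_blocks_upto (S i)); lia.
  - destruct (blocks_upto_prefix n (S i) ltac:(lia)) as [r ->]; rewrite app_nth1; auto.
Qed.

Lemma enum_blocks_surj K c : In c (blocks K) -> exists i, enum_blocks i = c.
Proof.
  intros Hc; destruct (In_nth _ _ cyl0 Hc) as (q & Hq & <-).
  exists (length (blocks_upto K) + q)%nat.
  rewrite (enum_blocks_nth (S K)); cbn [blocks_upto]; [|rewrite length_app; lia].
  rewrite app_nth2 by lia; f_equal; lia.
Qed.

Lemma sum_cyl_mass_nth l N :
  (N < length l)%nat -> sum_f_R0 (fun i => cyl_mass (nth i l cyl0)) N <= listmass l.
Proof.
  revert N; induction l as [|c l IH]; intros N HN; cbn in HN; [lia|].
  destruct N as [|N].
  - cbn [sum_f_R0 nth]; pose proof (listmass_nonneg l); unfold listmass in *; cbn [fold_right]; lra.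
  - rewrite decomp_sum by lia; cbn [nth pred].
    specialize (IH N ltac:(lia)); unfold listmass in *; cbn [fold_right]; lra.
Qed.

Lemma enum_blocks_mass N : sum_f_R0 (fun i => cyl_mass (enum_blocks i)) N <= eps.
Proof.
  pose proof (length_blocks_upto (S N)).
  rewrite (sum_eq _ (fun i => cyl_mass (nth i (blocks_upto (S N)) cyl0)))
    by (intros i Hi; rewrite (enum_blocks_nth (S N)); auto; lia).
  eapply Rle_trans; [apply sum_cyl_mass_nth; lia|].
  eapply Rle_trans; [apply listmass_blocks_upto|].
  assert (0 < (/ 2) ^ S N) by (apply pow_lt; lra).
  assert (0 <= eps).
  { specialize (blocks_mass 0%nat); pose proof (listmass_nonneg (blocks 0%nat)); cbn in *; lra. }
  nra.
Qed.

End Enumerate.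

Lemma pow_quarter_small x : x > 0 -> exists n, (/ 4) ^ n <= x.
Proof.
  intros Hx; destruct (pow_lt_1_zero (/ 4) ltac:(rewrite Rabs_pos_eq; lra) x Hx) as [n Hn].
  exists n; specialize (Hn n (le_n n)); rewrite Rabs_pos_eq in Hn; [lra|].
  left; apply pow_lt; lra.
Qed.

Lemma null_set_countable_union (P : nat -> (nat -> letter) -> (nat -> letter) -> Prop) :
  (forall K, finitely_null (P K)) -> null_set (fun X Y => exists K, P K X Y).
Proof.
  intros HP eps Heps.
  assert (Hpos : forall K, eps * (/ 2) ^ S (S K) > 0)
    by (intros K; apply Rmult_gt_0_compat; [lra|apply pow_lt; lra]).
  destruct (choice (fun K l => covers l (P K) /\ listmass l <= eps * (/ 2) ^ S (S K)))
    as [cover Hcover]; [intros K; apply HP, Hpos|].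
  destruct (choice (fun K n => (/ 4) ^ n <= eps * (/ 2) ^ S (S K)))
    as [pad Hpad]; [intros K; apply pow_quarter_small, Hpos|].
  (* a padding cylinder of negligible mass makes every block nonempty *)
  set (blocks K := (repeat LB (pad K), []) :: cover K).
  assert (Hmass : forall K, listmass (blocks K) <= eps * (/ 2) ^ S K).
  { intros K; destruct (Hcover K) as [_ Hm]; specialize (Hpad K).
    unfold blocks, listmass in *; cbn [fold_right]; unfold cyl_mass at 1; cbn [fst snd].
    rewrite repeat_length, Nat.add_0_r; cbn [pow] in *; lra. }
  exists (enum_blocks blocks); split.
  - intros X Y (K & HK). destruct (Hcover K) as [Hc _].
    destruct (Hc X Y HK) as (c & Hin & Hcyl).
    destruct (enum_blocks_surj blocks (fun K => ltac:(discriminate)) K c) as [i Hi];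
      [right; auto|].
    exists i; rewrite Hi; auto.
  - apply enum_blocks_mass; auto; intros K; discriminate.
Qed.

Lemma null_set_mono (P Q : (nat -> letter) -> (nat -> letter) -> Prop) :
  (forall X Y, Q X Y -> P X Y) -> null_set P -> null_set Q.
Proof.
  intros HQP HP eps Heps; destruct (HP eps Heps) as (C & Hcov & Hmass).
  exists C; split; auto.
Qed.

Definition depth_bounded (K : nat) (X Y : nat -> letter) : Prop :=
  exists red (side : bool), forall n, (depth red (if side then Y else X) n <= K)%nat.

Lemma depth_bounded_null : null_set (fun X Y => exists K, depth_bounded K X Y).
Proof.
  apply null_set_countable_union; intros K.
  apply finitely_null_exists_bool; intros red.
  apply finitely_null_exists_bool; intros side.
  apply depth_bounded_finitely_null.
Qed.

Lemma depth_unbounded_of_not_bounded X Y : ~ (exists K, depth_bounded K X Y) ->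
  forall (side : bool) red k, exists n, (k < depth red (if side then Y else X) n)%nat.
Proof.
  intros Hnb side red k; apply NNPP; intros Hk.
  apply Hnb; exists k, red, side; intros n.
  apply Nat.nlt_ge; intros Hn; apply Hk; eauto.
Qed.

Theorem mainTheorem14 :
  almost_surely (fun X Y =>
    (forall r : nat, exists M : nat, forall m : nat, (M <= m)%nat ->
        same_ball X Y (Some m) (Some M) r /\ same_ball X Y (Some m) None r) /\
    locally_finite X Y /\
    one_ended X Y).
Proof.
  apply (null_set_mono (fun X Y => exists K, depth_bounded K X Y)); [|exact depth_bounded_null].
  intros X Y Hbad; apply NNPP; intros Hnb.
  pose proof (depth_unbounded_of_not_bounded X Y Hnb) as Hunb.
  apply Hbad; split; [|split].
  - exact (balls_stabilize X Y (Hunb false) (Hunb true)).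
  - exact (limit_locally_finite X Y (Hunb false) (Hunb true)).
  - exact (limit_one_ended X Y (Hunb false) (Hunb true)).
Qed.
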